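(* Let $r\ge 2$ and let $\psi\in C^\infty(\mathbb{R})$ with $\psi''>0$ everywhere. Let $\mathcal{M}_{3,r,\psi}=(\mathbb{R}^{2r+2},g_{3,r,\psi})$, where on $\mathbb{R}^{2r+2}$ with coordinates $(u_1,\dots,u_r,v_1,\dots,v_r,x,y)$ the metric $g_{3,r,\psi}$ has as its only non-zero components (up to symmetry) $g(\partial_x,\partial_y)=1$, $g(\partial_{u_i},\partial_{v_j})=\delta_{ij}$, and $g(\partial_x,\partial_x)=-2u_1v_2-\dots-2u_{r-1}v_r-2\psi(u_r)$. Then $\mathcal{M}_{3,r,\psi}$ is Osserman nilpotent of order $2r$: for every tangent vector $\xi$ the Jacobi operator satisfies $J(\xi)^{2r}=0$, and there exist a point $P_0$ and $\xi_0\in T_{P_0}\mathbb{R}^{2r+2}$ with $J(\xi_0)^{2r-1}\neq 0$.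
   Context: The curvature tensor is $R(a,b,c,d)=g\big((\nabla_a\nabla_b-\nabla_b\nabla_a-\nabla_{[a,b]})c,d\big)$. For a tangent vector $\xi$ at $P$, the Jacobi operator $J(\xi)$ is the linear endomorphism of $T_PM$ characterized by $g(J(\xi)y,z)=R(y,\xi,\xi,z)$ for all $y,z\in T_PM$. *)

From HB Require Import structures.
From mathcomp Require Import all_boot all_order all_algebra.
From mathcomp Require Import all_classical all_reals all_analysis.
Set Implicit Arguments. Unset Strict Implicit. Unset Printing Implicit Defensive.
Import Order.TTheory GRing.Theory Num.Theory.
Import numFieldNormedType.Exports.
Local Open Scope ring_scope.

(* Points of R^n and tangent-vector components are row vectors 'rV[R]_n.
   A metric is a matrix-valued function  g : 'rV_n -> 'M_n  (g p i j = g(d_i,d_j) at p). *)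

Section Coord.
Variables (R : realType) (n : nat).

Definition ecoord (i : 'I_n) : 'rV[R]_n := delta_mx 0 i.

Definition pderiv (i : 'I_n) (f : 'rV[R]_n -> R) (p : 'rV[R]_n) : R :=
  'D_(ecoord i) f p.

Variable g : 'rV[R]_n -> 'M[R]_n.

(* Christoffel symbols of the Levi-Civita connection:
   nabla_{d_i} d_j = sum_k Gamma^k_{ij} d_k,
   Gamma^k_{ij} = 1/2 sum_l g^{kl} (d_i g_{jl} + d_j g_{il} - d_l g_{ij}). *)
Definition christoffel (p : 'rV[R]_n) (k i j : 'I_n) : R :=
  2^-1 * \sum_(l < n) invmx (g p) k l *
     (pderiv i (fun q => g q j l) p + pderiv j (fun q => g q i l) p
      - pderiv l (fun q => g q i j) p).

(* Components of the curvature endomorphism with the convention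
   R(a,b) = nabla_a nabla_b - nabla_b nabla_a - nabla_[a,b]:
   R(d_i,d_j) d_k = sum_l riem p l i j k d_l. *)
Definition riem (p : 'rV[R]_n) (l i j k : 'I_n) : R :=
  pderiv i (fun q => christoffel q l j k) p
  - pderiv j (fun q => christoffel q l i k) p
  + \sum_(m < n) (christoffel p m j k * christoffel p l i m
                  - christoffel p m i k * christoffel p l j m).

(* The curvature tensor R(a,b,c,d) = g(R(a,b)c, d) at p. *)
Definition curv (p : 'rV[R]_n) (a b c d : 'rV[R]_n) : R :=
  \sum_(i < n) \sum_(j < n) \sum_(k < n) \sum_(l < n) \sum_(s < n)
    a 0 i * b 0 j * c 0 k * d 0 s * riem p l i j k * g p l s.

(* Jacobi operator J(xi) at p, as the matrix acting on column component
   vectors: (J(xi) y)^l = sum_i J l i y^i, where J(xi) y = R(y,xi)xi.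
   Hence g(J(xi) y, z) = R(y, xi, xi, z). *)
Definition jacobi (p xi : 'rV[R]_n) : 'M[R]_n :=
  \matrix_(l, i) \sum_(j < n) \sum_(k < n) xi 0 j * xi 0 k * riem p l i j k.

End Coord.

(* Dimension 2r+2, written (2*r).+2 so that square matrices form a ring.
   Coordinate indices (0-based): u_i  |-> i-1   (i = 1..r),
                                 v_j  |-> r+j-1 (j = 1..r),
                                 x    |-> 2r,   y |-> 2r+1. *)
Definition dimM (r : nat) : nat := (2 * r).+2.

Definition coordM (R : realType) (r : nat) (p : 'rV[R]_(dimM r)) (k : nat) : R :=
  p 0 (inord k).

Definition metric3 (R : realType) (r : nat) (psi : R -> R)
    (p : 'rV[R]_(dimM r)) : 'M[R]_(dimM r) :=
  \matrix_(i, j)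
    let i' := nat_of_ord i in let j' := nat_of_ord j in
    if (((i' == 2 * r) && (j' == (2 * r).+1)) || ((i' == (2 * r).+1) && (j' == 2 * r)))%N
    then 1
    else if (((i' < r) && (j' == i' + r)) || ((j' < r) && (i' == j' + r)))%N
    then 1
    else if ((i' == 2 * r) && (j' == 2 * r))%N
    then (* g(d_x,d_x) = -2 u_1 v_2 - ... - 2 u_{r-1} v_r - 2 psi(u_r) *)
      - 2 * (\sum_(k < r.-1) coordM p k * coordM p (r + k.+1)%N)
      - 2 * psi (coordM p r.-1%N)
    else 0.

Definition smooth_fun (R : realType) (psi : R -> R) : Prop :=
  forall (k : nat) (x : R), derivable (derive1n k psi) x 1.

(* The metric is g0 + f dx^2, where g0 is the flat metric pairing u_i with v_i and
   x with y, and f = -2 (u_1 v_2 + ... + u_(r-1) v_r) - 2 psi(u_r) does not depend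
   on y.  Hence the Christoffel symbols are linear in the first derivatives of f and
   the quadratic terms of the curvature vanish, so the curvature is linear in the
   Hessian of f.  Put the coordinates on the levels u_1 < ... < u_r < v_r < ... < v_1,
   with x on the bottom level and y on the top one: the Hessian of f only couples
   u_k with v_(k+1) and u_r with itself, which forces every Jacobi operator to map
   each coordinate direction into strictly higher levels; there are 2r levels, so
   J(xi)^(2r) = 0.  At the origin, J(d_x) sends
   d_(u_1) -> ... -> d_(u_r) -> d_(v_r) -> ... -> d_(v_1) with factors 1 and
   psi''(0) > 0, a chain of length 2r - 1, so J(d_x)^(2r-1) <> 0. *)

From mathcomp Require Import all_boot all_order all_algebra.
From mathcomp Require Import all_classical all_reals all_analysis.
From mathcomp Require Import ring zify.
Import Order.TTheory GRing.Theory Num.Theory.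
Import numFieldNormedType.Exports.
Set Implicit Arguments. Unset Strict Implicit. Unset Printing Implicit Defensive.
Local Open Scope ring_scope.

Ltac simpr := rewrite ?(mulr0n, mulr1n, mul0r, mulr0, mul1r, mulr1,
  add0r, addr0, subr0, sub0r, oppr0).

Lemma sum_natr_eq_mull (R : pzSemiRingType) N (c : 'I_N) (F : 'I_N -> R) :
  \sum_(k < N) (k == c)%:R * F k = F c.
Proof.
rewrite (bigD1 c) //= eqxx mul1r big1 ?addr0 // => k /negbTE ->.
by rewrite mul0r.
Qed.

Lemma sum_nat_eq_natr_mull (R : pzSemiRingType) N (b : nat) (F : nat -> R) :
  \sum_(k < N) ((k : nat) == b)%:R * F k = (b < N)%:R * F b.
Proof.
have [bN|Nb] := ltnP b N.
  by rewrite -(sum_natr_eq_mull (Ordinal bN) (fun k => F k)) mul1r.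
rewrite mul0r big1 // => k _; rewrite (_ : (k : nat) == b = false) ?mul0r //.
by apply/negbTE; rewrite neq_ltn (leq_trans _ Nb).
Qed.

Section LevelledMatrices.
Variables (R : pzRingType) (N : nat) (M : 'M[R]_N.+1) (lv : 'I_N.+1 -> nat).
Hypothesis M_raises_level : forall l i, (lv l <= lv i)%N -> M l i = 0.

Lemma mx_level_pow_eq0 k l i : (lv l < lv i + k)%N -> (M ^+ k) l i = 0.
Proof.
elim: k l i => [|k IH] l i lt_li.
  by rewrite expr0 mxE (_ : l == i = false) //; apply: contraTF lt_li => /eqP->; rewrite addn0 ltnn.
rewrite exprSr -mulmxE mxE big1 // => m _.
have [le_mi|lt_im] := leqP (lv m) (lv i); first by rewrite M_raises_level ?mulr0.
by rewrite IH ?mul0r //; apply: leq_trans lt_li _; rewrite addnS -addSn leq_add2r.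
Qed.

Lemma mx_level_nilpotent K : (forall i, (lv i < K)%N) -> M ^+ K = 0.
Proof.
move=> lvK; apply/matrixP => l i; rewrite mxE mx_level_pow_eq0 //.
exact: leq_trans (lvK l) (leq_addl _ _).
Qed.

End LevelledMatrices.

Section MatrixChains.
Variables (R : idomainType) (N : nat) (M : 'M[R]_N.+1).
Variables (v : nat -> 'cV[R]_N.+1) (c : nat -> R) (K : nat).
Hypothesis M_chain : forall k, (k < K)%N -> M *m v k = c k *: v k.+1.

Lemma mx_chain_pow k : (k <= K)%N -> M ^+ k *m v 0 = (\prod_(j < k) c j) *: v k.
Proof.
elim: k => [|k IH] kK; first by rewrite expr0 mul1mx big_ord0 scale1r.
rewrite exprS -mulmxE -mulmxA IH 1?ltnW // -scalemxAr M_chain //.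
by rewrite scalerA big_ord_recr.
Qed.

Lemma mx_chain_pow_neq0 :
  (forall k, (k < K)%N -> c k != 0) -> v K != 0 -> M ^+ K != 0.
Proof.
move=> c_neq0 vK_neq0; apply: contraNneq vK_neq0 => MK0.
have := mx_chain_pow (leqnn K); rewrite MK0 mul0mx => /esym/eqP.
rewrite scalemx_eq0 => /orP[|/eqP//]; rewrite prodf_seq_eq0.
by case/hasP => j _ /= cj0; have := c_neq0 j (ltn_ord j); rewrite cj0.
Qed.

End MatrixChains.

Section PointwiseDerivatives.
Variables (R : realType) (n : nat).
Implicit Types (p v : 'rV[R]_n) (F G : 'rV[R]_n -> R).

Lemma is_derive_addr F G p v dF dG : is_derive p v F dF -> is_derive p v G dG ->
  is_derive p v (fun q => F q + G q) (dF + dG).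
Proof. exact: is_deriveD. Qed.

Lemma is_derive_subr F G p v dF dG : is_derive p v F dF -> is_derive p v G dG ->
  is_derive p v (fun q => F q - G q) (dF - dG).
Proof. exact: is_deriveB. Qed.

Lemma is_derive_mulr F G p v dF dG : is_derive p v F dF -> is_derive p v G dG ->
  is_derive p v (fun q => F q * G q) (F p * dG + G p * dF).
Proof. exact: is_deriveM. Qed.

Lemma is_derive_mulrl (c : R) F p v dF : is_derive p v F dF ->
  is_derive p v (fun q => c * F q) (c * dF).
Proof. exact: is_deriveZ. Qed.

Lemma is_derive_sumr N (F : 'I_N -> 'rV[R]_n -> R) (dF : 'I_N -> R) p v :
  (forall k, is_derive p v (F k) (dF k)) ->
  is_derive p v (fun q => \sum_(k < N) F k q) (\sum_(k < N) dF k).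
Proof.
move=> dF_k; rewrite (_ : (fun q => _) = \sum_(k < N) F k); first exact: is_derive_sum.
by apply/funext => q; rewrite fct_sumE.
Qed.

Lemma is_derive_coord m p v : is_derive p v (fun q => q 0 m) (v 0 m).
Proof.
have did : derivable (@id 'rV[R]_n) p v by apply: derivable_id.
apply: DeriveDef; first by move/derivable_mxP : did => /(_ 0 m).
by have := derive_mx did; rewrite derive_id => /matrixP/(_ 0 m); rewrite mxE.
Qed.

Lemma is_derive_comp_coord (phi : R -> R) m p v : derivable phi (p 0 m) 1 ->
  is_derive p v (fun q => phi (q 0 m)) (phi^`()%classic (p 0 m) * v 0 m).
Proof.
move=> dphi.
have dcoord : differentiable (fun q : 'rV[R]_n => q 0 m) p by apply: differentiable_coord.
have dphi' : differentiable phi (p 0 m) by apply/derivable1_diffP.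
have dcomp : differentiable (phi \o (fun q : 'rV[R]_n => q 0 m)) p.
  exact: differentiable_comp.
apply: DeriveDef; first exact: diff_derivable.
have dcoord_val := is_derive_coord m p v.
by rewrite (deriveE _ dcomp) diff_comp //= deriv1E //= -(deriveE _ dcoord) derive_val mulrC.
Qed.

Lemma pderiv_val i F p dF : is_derive p (ecoord R i) F dF -> pderiv i F p = dF.
Proof. by move=> dF_i; rewrite /pderiv derive_val. Qed.

End PointwiseDerivatives.

(* g0 + f dx^2, where g0 is the flat metric pairing each coordinate i with s i,
   so that x is g0-null as soon as s x <> x. *)
Definition wave_metric (R : realType) n (s : 'I_n -> 'I_n) (x : 'I_n)
    (f : 'rV[R]_n -> R) (q : 'rV[R]_n) : 'M[R]_n :=
  \matrix_(i, j) ((j == s i)%:R + (i == x)%:R * (j == x)%:R * f q).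

Section WaveMetric.
Variables (R : realType) (n : nat) (s : 'I_n -> 'I_n) (x : 'I_n) (f : 'rV[R]_n -> R).
(* The partial derivatives of f are abstract functions rather than [pderiv] terms:
   comparing two distinct [pderiv] terms makes unification unfold limits. *)
Variables (df : 'I_n -> 'rV[R]_n -> R) (d2f : 'I_n -> 'I_n -> 'rV[R]_n -> R).
Hypothesis sK : involutive s.
Hypothesis sx_neq_x : s x != x.
Local Notation y := (s x).
Hypothesis f_is_derive : forall i q, is_derive q (ecoord R i) f (df i q).
Hypothesis df_is_derive : forall a b q, is_derive q (ecoord R a) (df b) (d2f a b q).
Hypothesis df_y : forall q, df y q = 0.

Local Notation g := (wave_metric s x f).

Lemma eq_sym_s k l : (s k == l) = (k == s l).
Proof. by rewrite -(inj_eq (can_inj sK)) sK. Qed.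

Lemma x_neq_y : (x == y) = false.
Proof. by apply/negbTE; rewrite eq_sym. Qed.

Lemma invmx_wave_metric q :
  invmx (g q) = \matrix_(k, l) ((l == s k)%:R - (k == y)%:R * (l == y)%:R * f q).
Proof.
set G' := \matrix_(k, l) _.
suff gG' : g q *m G' = 1%:M.
  have [g_unit _] := mulmx1_unit gG'.
  by rewrite -[invmx _]mulmx1 -gG' mulmxA mulVmx // mul1mx.
apply/matrixP => i j; rewrite !mxE.
under eq_bigr => k _ do rewrite !mxE mulrDl -!mulrA.
rewrite big_split /= sum_natr_eq_mull.
under eq_bigr => k _ do rewrite mulrCA.
rewrite sum_natr_eq_mull sK (inj_eq (can_inj sK)) x_neq_y (eq_sym j i).
rewrite /=; ring.
Qed.

Lemma pderiv_wave_metric i j l q :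
  pderiv i (fun q => g q j l) q = (j == x)%:R * (l == x)%:R * df i q.
Proof.
apply: pderiv_val; rewrite -[X in is_derive _ _ _ X]add0r.
rewrite (_ : (fun q' => g q' j l) =
             fun q' => (l == s j)%:R + (j == x)%:R * (l == x)%:R * f q').
  exact: is_derive_addr.
by apply/funext => q'; rewrite mxE.
Qed.

Lemma christoffel_wave q k i j :
  christoffel g q k i j = 2^-1 * ((k == y)%:R *
    ((j == x)%:R * df i q + (i == x)%:R * df j q)
    - (i == x)%:R * (j == x)%:R * df (s k) q).
Proof.
rewrite /christoffel invmx_wave_metric; congr (_ * _).
under eq_bigr => l _ do rewrite !pderiv_wave_metric mxE mulrBl.
rewrite sumrB sum_natr_eq_mull.
under eq_bigr => l _ do rewrite -!mulrA mulrCA.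
rewrite sum_natr_eq_mull (eq_sym y) x_neq_y df_y eq_sym_s; simpr.
ring.
Qed.

Lemma christoffel_wave_x q i j : christoffel g q x i j = 0.
Proof. by rewrite christoffel_wave x_neq_y df_y; simpr. Qed.

Lemma christoffel_wave_y q l i : christoffel g q l i y = 0.
Proof. by rewrite christoffel_wave (eq_sym y) x_neq_y df_y; simpr. Qed.

Lemma christoffel_wave_mul_eq0 q l i j k m : (i != x) || (j != x) ->
  christoffel g q m j k * christoffel g q l i m = 0.
Proof.
have [->|m_neq_x] := eqVneq m x; first by rewrite christoffel_wave_x mul0r.
have [->|m_neq_y] := eqVneq m y; first by rewrite christoffel_wave_y mulr0.
rewrite !christoffel_wave (negbTE m_neq_x) (negbTE m_neq_y).
by case/orP => /negbTE->; simpr.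
Qed.

Lemma pderiv_christoffel_wave a l j k q :
  pderiv a (fun q => christoffel g q l j k) q = 2^-1 * ((l == y)%:R *
    ((k == x)%:R * d2f a j q + (j == x)%:R * d2f a k q)
    - (j == x)%:R * (k == x)%:R * d2f a (s l) q).
Proof.
apply: pderiv_val; rewrite (funext (fun q' => christoffel_wave q' l j k)).
exact: is_derive_mulrl.
Qed.

Lemma riem_wave q l i j k : riem g q l i j k =
  pderiv i (fun q => christoffel g q l j k) q - pderiv j (fun q => christoffel g q l i k) q.
Proof.
rewrite /riem; have [/andP[/eqP-> /eqP->]|ij_x] := boolP ((i == x) && (j == x)).
  by rewrite big1 ?addr0 // => m _; rewrite subrr.
rewrite negb_and in ij_x; rewrite big1 ?addr0 // => m _.
by rewrite !christoffel_wave_mul_eq0 ?subrr // orbC.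
Qed.

Lemma riem_waveE q l i j k : riem g q l i j k =
  2^-1 * ((l == y)%:R * ((k == x)%:R * d2f i j q + (j == x)%:R * d2f i k q)
          - (j == x)%:R * (k == x)%:R * d2f i (s l) q)
  - 2^-1 * ((l == y)%:R * ((k == x)%:R * d2f j i q + (i == x)%:R * d2f j k q)
          - (i == x)%:R * (k == x)%:R * d2f j (s l) q).
Proof. by rewrite riem_wave !pderiv_christoffel_wave. Qed.

Lemma jacobi_wave_dx q l i : (forall a, d2f a x q = 0) -> (forall a, d2f x a q = 0) ->
  jacobi g q (ecoord R x) l i = - 2^-1 * d2f i (s l) q.
Proof.
move=> d2f_x d2f_x'; rewrite mxE.
under eq_bigr => j _ do under eq_bigr => k _ do
  rewrite /ecoord !mxE /= mulrAC mulrC.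
under eq_bigr => j _ do rewrite sum_natr_eq_mull.
rewrite sum_natr_eq_mull riem_waveE eqxx d2f_x !d2f_x' /=.
ring.
Qed.

Section Levels.
Variables (q : 'rV[R]_n) (lv : 'I_n -> nat).
Hypothesis lv_x_min : forall a, (lv x <= lv a)%N.
Hypothesis lv_y_max : forall a, (lv a <= lv y)%N.
Hypothesis lv_x_lt_y : (lv x < lv y)%N.
Hypothesis d2f_sym : forall a b, d2f a b q = d2f b a q.
Hypothesis d2f_raises_level : forall a b, d2f a b q != 0 -> (lv a < lv (s b))%N.

Lemma hess_level_eq0 a b : (lv (s b) <= lv a)%N -> d2f a b q = 0.
Proof. by move=> le_ba; apply: contraTeq le_ba => /d2f_raises_level; rewrite -ltnNge. Qed.

Lemma riem_wave_level_eq0 l i j k : (lv l <= lv i)%N -> riem g q l i j k = 0.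
Proof.
move=> le_li; rewrite riem_waveE (@hess_level_eq0 i (s l)) ?sK //.
have [l_y|l_neq_y] := eqVneq l y.
  have i_neq_x : (i == x) = false.
    by apply: contraTF le_li => /eqP->; rewrite l_y -ltnNge.
  have d2f_i b : d2f i b q = 0.
    by apply: hess_level_eq0; rewrite (leq_trans (lv_y_max _)) -?l_y.
  by rewrite i_neq_x (d2f_sym j i) !d2f_i; simpr.
have [i_x|_] := eqVneq i x; last by simpr.
have -> : d2f j (s l) q = 0.
  by apply: hess_level_eq0; rewrite sK (leq_trans le_li) // i_x lv_x_min.
by simpr.
Qed.

Lemma jacobi_wave_level_eq0 xi l i : (lv l <= lv i)%N -> jacobi g q xi l i = 0.
Proof.
by move=> le_li; rewrite mxE big1 // => j _; rewrite big1 // => k _;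
  rewrite riem_wave_level_eq0 ?mulr0.
Qed.

End Levels.

End WaveMetric.

Section Metric3.
Variables (R : realType) (r : nat) (psi : R -> R).
Hypothesis r_gt0 : (0 < r)%N.
Hypothesis psi_derivable : forall t, derivable psi t 1.
Hypothesis dpsi_derivable : forall t, derivable psi^`()%classic t 1.

Local Notation n := (dimM r).
Local Notation psi' := psi^`()%classic.
Local Notation psi'' := psi^`()^`()%classic.

Definition dual_index (j : nat) : nat :=
  (if j < r then j + r else if j < 2 * r then j - r
   else if j == 2 * r then (2 * r).+1 else 2 * r)%N.

Definition level_index (j : nat) : nat :=
  (if j < r then j else if j < 2 * r then 3 * r - 1 - j
   else if j == 2 * r then 0 else 2 * r - 1)%N.

Definition chain_index (k : nat) : nat := (if k < r then k else 3 * r - 1 - k)%N.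

Lemma dual_index_lt j : (dual_index j < n)%N.
Proof. rewrite /dual_index /dimM; repeat case: ifP; lia. Qed.

Lemma dual_indexK j : (j < n)%N -> dual_index (dual_index j) = j.
Proof. rewrite /dual_index /dimM; repeat case: ifP; lia. Qed.

Definition dual (j : 'I_n) : 'I_n := inord (dual_index j).
Definition xcoord : 'I_n := inord (2 * r)%N.

Lemma dualE j : dual j = dual_index j :> nat.
Proof. exact/inordK/dual_index_lt. Qed.

Lemma xcoordE : xcoord = (2 * r)%N :> nat.
Proof. by rewrite inordK // /dimM. Qed.

Lemma eq_dual i j : (j == dual i) = (j == dual_index i :> nat).
Proof. by rewrite -val_eqE /= inordK ?dual_index_lt. Qed.

Lemma eq_xcoord i : (i == xcoord) = (i == 2 * r :> nat)%N.
Proof. by rewrite -val_eqE /= inordK // /dimM. Qed.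

Lemma dualK : involutive dual.
Proof. by move=> j; apply/eqP; rewrite eq_sym eq_dual dualE dual_indexK. Qed.

Lemma dual_xcoordE : dual xcoord = (2 * r).+1%N :> nat.
Proof. by rewrite dualE xcoordE /dual_index; repeat case: ifP; lia. Qed.

Lemma dual_xcoord_neq : dual xcoord != xcoord.
Proof. by apply/eqP => /(congr1 (@nat_of_ord _)); rewrite dual_xcoordE xcoordE; lia. Qed.

Definition gxx (q : 'rV[R]_n) : R :=
  - 2 * (\sum_(k < r.-1) coordM q k * coordM q (r + k.+1)) - 2 * psi (coordM q r.-1).

Lemma metric3_entry (i j : nat) (c : R) : (i < n)%N -> (j < n)%N ->
  (if (((i == 2 * r) && (j == (2 * r).+1)) || ((i == (2 * r).+1) && (j == 2 * r)))%N
   then 1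
   else if (((i < r) && (j == i + r)) || ((j < r) && (i == j + r)))%N then 1
   else if ((i == 2 * r) && (j == 2 * r))%N then c else 0) =
  (j == dual_index i)%:R + ((i == 2 * r) && (j == 2 * r))%N%:R * c.
Proof.
rewrite /dimM => lt_in lt_jn.
have -> : j == dual_index i = [|| (i == 2 * r) && (j == (2 * r).+1),
    (i == (2 * r).+1) && (j == 2 * r), (i < r) && (j == i + r) | (j < r) && (i == j + r)]%N.
  by rewrite /dual_index; repeat case: ifP; lia.
rewrite orbA; case: ifP => [c12|_] /=.
  by rewrite (_ : ((i == 2 * r) && (j == 2 * r))%N = false); [simpr | lia].
case: ifP => [c34|_] /=.
  by rewrite (_ : ((i == 2 * r) && (j == 2 * r))%N = false); [simpr | lia].
by case: ifP => _; simpr.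
Qed.

Lemma metric3_wave : metric3 psi = wave_metric dual xcoord gxx.
Proof.
apply/funext => q; apply/matrixP => i j.
by rewrite /metric3 !mxE /= metric3_entry // eq_dual !eq_xcoord -mulnb natrM.
Qed.

Definition dgxx (v q : 'rV[R]_n) : R :=
  - 2 * (\sum_(k < r.-1) (coordM v (r + k.+1) * coordM q k + coordM v k * coordM q (r + k.+1)))
  - 2 * (coordM v r.-1 * psi' (coordM q r.-1)).

Definition d2gxx (v w q : 'rV[R]_n) : R :=
  - 2 * (\sum_(k < r.-1) (coordM v (r + k.+1) * coordM w k + coordM v k * coordM w (r + k.+1)))
  - 2 * (coordM v r.-1 * (psi'' (coordM q r.-1) * coordM w r.-1)).

Lemma is_derive_gxx q v : is_derive q v gxx (dgxx v q).
Proof.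
rewrite /gxx; apply: is_derive_eq.
  apply: is_derive_subr; apply: is_derive_mulrl; last exact: is_derive_comp_coord.
  by apply: is_derive_sumr => k; apply: is_derive_mulr; apply: is_derive_coord.
rewrite /dgxx; congr (_ * _ - _ * _); last exact: mulrC.
by apply: eq_bigr => k _; rewrite mulrC [X in _ + X]mulrC.
Qed.

Lemma is_derive_dgxx q v w : is_derive q w (dgxx v) (d2gxx v w q).
Proof.
rewrite /dgxx; apply: is_derive_subr; apply: is_derive_mulrl.
  apply: is_derive_sumr => k.
  by apply: is_derive_addr; apply: is_derive_mulrl; apply: is_derive_coord.
by apply: is_derive_mulrl; apply: is_derive_comp_coord.
Qed.

Let is_derive_gxx_coord i q : is_derive q (ecoord R i) gxx (dgxx (ecoord R i) q) :=
  is_derive_gxx q _.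

Let is_derive_dgxx_coord a b q :
  is_derive q (ecoord R a) (dgxx (ecoord R b)) (d2gxx (ecoord R b) (ecoord R a) q) :=
  is_derive_dgxx q _ _.

Lemma coordM_ecoord (b : 'I_n) m : (m < n)%N -> coordM (ecoord R b) m = (m == b :> nat)%:R.
Proof. by move=> lt_mn; rewrite /coordM /ecoord mxE eqxx -val_eqE /= inordK. Qed.

Lemma dgxx_dual_xcoord q : dgxx (ecoord R (dual xcoord)) q = 0.
Proof.
have e_y m : (m < 2 * r)%N -> coordM (ecoord R (dual xcoord)) m = 0.
  move=> lt_m; rewrite coordM_ecoord ?dual_xcoordE; last by rewrite /dimM; lia.
  by rewrite (_ : (m == _) = false) //; lia.
rewrite /dgxx e_y ?mul0r ?mulr0 ?subr0; last lia.
rewrite big1 ?mulr0 // => k _; have := ltn_ord k => lt_k.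
by rewrite !e_y ?mul0r ?addr0 //; lia.
Qed.

Lemma d2gxxE (a b : 'I_n) q : d2gxx (ecoord R b) (ecoord R a) q =
  - 2 * (((a < r.-1) && (r + a.+1 == b))%N%:R + ((b < r.-1) && (r + b.+1 == a))%N%:R)
  - 2 * (psi'' (coordM q r.-1) * ((r.-1 == a) && (r.-1 == b))%N%:R).
Proof.
rewrite /d2gxx; congr (_ * _ - _ * _).
  rewrite (eq_bigr (fun k : 'I_r.-1 => (k == a :> nat)%:R * (r + k.+1 == b :> nat)%:R
                                    + (k == b :> nat)%:R * (r + k.+1 == a :> nat)%:R)).
    rewrite big_split /= (sum_nat_eq_natr_mull _ a (fun k => (r + k.+1 == b :> nat)%:R)).
    by rewrite (sum_nat_eq_natr_mull _ b (fun k => (r + k.+1 == a :> nat)%:R)) -!natrM !mulnb.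
  move=> k _; have := ltn_ord k => lt_k.
  by rewrite !coordM_ecoord /dimM; [ring | lia ..].
by rewrite !coordM_ecoord /dimM -?mulnb ?natrM; [ring | lia ..].
Qed.

Definition hess_support (a b : nat) : bool :=
  [|| (a < r.-1) && (r + a.+1 == b), (b < r.-1) && (r + b.+1 == a)
    | (r.-1 == a) && (r.-1 == b)]%N.

Lemma d2gxx_eq0 (a b : 'I_n) q : ~~ hess_support a b ->
  d2gxx (ecoord R b) (ecoord R a) q = 0.
Proof.
by rewrite d2gxxE /hess_support !negb_or => /and3P[/negbTE-> /negbTE-> /negbTE->]; simpr.
Qed.

Lemma d2gxx_sym (a b : 'I_n) q :
  d2gxx (ecoord R b) (ecoord R a) q = d2gxx (ecoord R a) (ecoord R b) q.
Proof. by rewrite !d2gxxE; congr (- 2 * _ - 2 * (_ * _%:R)); [exact: addrC | rewrite andbC]. Qed.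

Lemma level_hess_support (a b : 'I_n) :
  hess_support a b -> (level_index a < level_index (dual_index b))%N.
Proof.
have := ltn_ord a; have := ltn_ord b.
by rewrite /hess_support /level_index /dual_index /dimM; repeat case: ifP; lia.
Qed.

Lemma d2gxx_chain k (l : 'I_n) q : (k < (2 * r).-1)%N ->
  d2gxx (ecoord R (dual l)) (ecoord R (inord (chain_index k))) q =
  - 2 * (l == chain_index k.+1 :> nat)%:R * (if k == r.-1 then psi'' (coordM q r.-1) else 1).
Proof.
move=> lt_k; have := ltn_ord l; rewrite /dimM => lt_l.
rewrite d2gxxE dualE inordK; last by rewrite /chain_index /dimM; case: ifP; lia.
have -> : ((chain_index k < r.-1) && (r + (chain_index k).+1 == dual_index l))%N =
          (k < r.-1)%N && (l == chain_index k.+1 :> nat).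
  by rewrite /chain_index /dual_index; repeat case: ifP; lia.
have -> : ((dual_index l < r.-1) && (r + (dual_index l).+1 == chain_index k))%N =
          (r.-1 < k)%N && (l == chain_index k.+1 :> nat).
  by rewrite /chain_index /dual_index; repeat case: ifP; lia.
have -> : ((r.-1 == chain_index k) && (r.-1 == dual_index l))%N =
          (k == r.-1)%N && (l == chain_index k.+1 :> nat).
  by rewrite /chain_index /dual_index; repeat case: ifP; lia.
by case: ltngtP => _ /=; simpr; [| | ring].
Qed.

Lemma level_index_lt (i : 'I_n) : (level_index i < 2 * r)%N.
Proof. by have := ltn_ord i; rewrite /level_index /dimM; repeat case: ifP; lia. Qed.

Lemma jacobi_metric3_level_eq0 q xi (l i : 'I_n) :
  (level_index l <= level_index i)%N -> jacobi (metric3 psi) q xi l i = 0.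
Proof.
have lv_x_min (a : 'I_n) : (level_index xcoord <= level_index a)%N.
  by rewrite xcoordE /level_index; repeat case: ifP; lia.
have lv_y_max (a : 'I_n) : (level_index a <= level_index (dual xcoord))%N.
  by have := ltn_ord a; rewrite dual_xcoordE /level_index /dimM; repeat case: ifP; lia.
have lv_x_lt_y : (level_index xcoord < level_index (dual xcoord))%N.
  by rewrite xcoordE dual_xcoordE /level_index; repeat case: ifP; lia.
have hess_raises (a b : 'I_n) : d2gxx (ecoord R b) (ecoord R a) q != 0 ->
    (level_index a < level_index (dual b))%N.
  move=> nz; rewrite dualE; apply: level_hess_support.
  by apply: contraNT nz => not_supp; rewrite d2gxx_eq0.
rewrite metric3_wave; apply: (jacobi_wave_level_eq0 dualK dual_xcoord_neq
  is_derive_gxx_coord is_derive_dgxx_coord dgxx_dual_xcoord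
  lv_x_min lv_y_max lv_x_lt_y (fun a b => d2gxx_sym a b q) hess_raises).
Qed.

Lemma jacobi_metric3_dx (l i : 'I_n) : jacobi (metric3 psi) 0 (ecoord R xcoord) l i =
  - 2^-1 * d2gxx (ecoord R (dual l)) (ecoord R i) 0.
Proof.
rewrite metric3_wave (jacobi_wave_dx dualK dual_xcoord_neq
  is_derive_gxx_coord is_derive_dgxx_coord dgxx_dual_xcoord) // => a.
all: by apply: d2gxx_eq0; rewrite xcoordE /hess_support; lia.
Qed.

Lemma chain_index_lt k : (chain_index k < n)%N.
Proof. by rewrite /chain_index /dimM; case: ifP; lia. Qed.

Definition chain_vec (k : nat) : 'cV[R]_n := delta_mx (inord (chain_index k)) ord0.

Lemma chain_vec_neq0 k : chain_vec k != 0.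
Proof.
apply/eqP => /matrixP/(_ (inord (chain_index k)) ord0).
by rewrite !mxE !eqxx /=; apply/eqP; exact: oner_neq0.
Qed.

Lemma jacobi_metric3_dx_chain k : (k < (2 * r).-1)%N ->
  jacobi (metric3 psi) 0 (ecoord R xcoord) *m chain_vec k =
  (if k == r.-1 then psi'' (coordM (0 : 'rV[R]_n) r.-1) else 1) *: chain_vec k.+1.
Proof.
move=> lt_k; rewrite /chain_vec -colE; apply/colP => l.
rewrite mxE [RHS]mxE [X in _ * X]mxE jacobi_metric3_dx d2gxx_chain // eqxx andbT.
rewrite -val_eqE /= inordK ?chain_index_lt // mulrA mulrA mulrNN mulVf ?pnatr_eq0 //.
by rewrite mul1r mulrC.
Qed.

End Metric3.

Theorem theorem1p6 (R : realType) (r : nat) (psi : R -> R) :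
  (2 <= r)%N ->
  smooth_fun psi ->
  (forall t : R, 0 < derive1n 2 psi t) ->
  (forall p xi : 'rV[R]_(dimM r),
      jacobi (metric3 psi) p xi ^+ (2 * r) = 0) /\
  (exists p0 xi0 : 'rV[R]_(dimM r),
      jacobi (metric3 psi) p0 xi0 ^+ (2 * r).-1 != 0).
Proof.
move=> r_ge2 psi_smooth psi''_gt0; have r_gt0 : (0 < r)%N by apply: leq_trans r_ge2.
have psi_der : forall t, derivable psi t 1 := psi_smooth 0%N.
have dpsi_der : forall t, derivable psi^`()%classic t 1 := psi_smooth 1%N.
split => [p xi|].
  apply: (mx_level_nilpotent (lv := fun i => level_index r i)).
    exact: (jacobi_metric3_level_eq0 r_gt0 psi_der dpsi_der).
  exact: level_index_lt.
exists 0, (ecoord R (xcoord r)).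
apply: (mx_chain_pow_neq0 (v := chain_vec R r)).
- exact: (jacobi_metric3_dx_chain r_gt0 psi_der dpsi_der).
- by move=> k _ /=; case: ifP => _; [exact/lt0r_neq0/psi''_gt0 | exact: oner_neq0].
- exact: chain_vec_neq0.
Qed.
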